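(* Let $K\in\{3,4\}$. For generic $U,H,W\in\mathbb{C}^{K\times K}$ (that is, for all triples outside the zero set of some nonzero polynomial in their entries), there exist diagonal matrices $D_1,D_2,D_3\in\mathbb{C}^{K\times K}$ and scalars $\lambda_1,\dots,\lambda_K\in\mathbb{C}$ such that, with $B:=HD_1+HD_2U+WD_3H$, for every $i\in\{1,\dots,K\}$ we have $B_{ij}=\lambda_i H_{ij}$ for all $j\neq i$, and $B_{ii}\neq \lambda_i H_{ii}$.
   Context: Setting: a $K$-user interference channel with full-duplex (in-band) interaction: $H$ is the channel matrix from sources to destinations, $U$ the channel matrix among sources, $W$ the channel matrix among destinations. In a two-phase scheme, in phase 1 sources send $x$, sources receive $Ux$ and destinations receive $Hx$; in phase 2 sources send $D_1x+D_2(Ux)$ and destinations send $D_3(Hx)$, so destinations receive $Bx$ (noise ignored). The diagonal coding matrices reflect that each node codes only over its own signals. The conditions mean interference at each destination is aligned between the two phases while the desired signal survives cancellation. *)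

From HB Require Import structures.
From mathcomp Require Import all_boot all_order all_algebra.
From mathcomp Require Import Rstruct.
From mathcomp Require Import complex.
From mathcomp Require Import mpoly.
From Stdlib Require Import Reals.
Set Implicit Arguments. Unset Strict Implicit. Unset Printing Implicit Defensive.
Import GRing.Theory Num.Theory.
Local Open Scope ring_scope.

Definition C : Type := complex Rdefinitions.R.


(* Vector of the 3K^2 entries of (U, H, W), used as the variables of a
   polynomial in the entries. *)
Definition entries (K : nat) (U H W : 'M[C]_K) : 'rV[C]_(K * K + K * K + K * K) :=
  row_mx (row_mx (mxvec U) (mxvec H)) (mxvec W).

Definition eval_entries (K : nat) (P : {mpoly C[K * K + K * K + K * K]})
  (U H W : 'M[C]_K) : C :=
  meval (fun i => entries U H W 0 i) P.

Definition Bmat (K : nat) (U H W : 'M[C]_K) (d1 d2 d3 : 'rV[C]_K) : 'M[C]_K :=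
  H *m diag_mx d1 + H *m diag_mx d2 *m U + W *m diag_mx d3 *m H.

(* For a fixed target, the alignment conditions are linear in the unknown diagonals.
   For K = 3 we ask for B = I (all lambda_i = 0): 9 equations in the 9 diagonal entries of
   D1, D2, D3.  For K = 4 we ask for B - Lambda H = diag(1, 1, 1, eps) with Lambda diagonal:
   since (D1, Lambda) = (I, I) solves the homogeneous system, the first entry of D1 is frozen
   and replaced by the slack eps, giving 16 equations in 16 unknowns.  The coefficient matrix
   N of such a system has entries polynomial in (U, H, W), so for a chosen unknown x (eps when
   K = 4) Cramer's rule makes det N * (adj N coordinate of x) = det N ^ 2 * x a polynomial,
   nonzero exactly where the system is uniquely solvable with x <> 0.  It is not the zero
   polynomial because it does not vanish at one explicit rational witness. *)

From HB Require Import structures.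
From mathcomp Require Import all_boot all_order all_algebra.
From mathcomp Require Import Rstruct complex.
From mathcomp Require Import mpoly.
From mathcomp Require Import ring lra.
Import GRing.Theory Num.Theory.
Local Open Scope ring_scope.
Set Implicit Arguments. Unset Strict Implicit. Unset Printing Implicit Defensive.

Definition BmatR (R : comNzRingType) (K : nat) (U H W : 'M[R]_K) (d1 d2 d3 : 'rV[R]_K) : 'M[R]_K :=
  H *m diag_mx d1 + H *m diag_mx d2 *m U + W *m diag_mx d3 *m H.

Lemma map_BmatR (R S : comNzRingType) (g : {rmorphism R -> S}) K (U H W : 'M[R]_K) d1 d2 d3 :
  map_mx g (BmatR U H W d1 d2 d3)
  = BmatR (map_mx g U) (map_mx g H) (map_mx g W) (map_mx g d1) (map_mx g d2) (map_mx g d3).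
Proof. by rewrite /BmatR !map_mxD !map_mxM !map_diag_mx. Qed.

Lemma BmatR_linearP (R : comNzRingType) K (U H W : 'M[R]_K) a d1 d2 d3 e1 e2 e3 :
  BmatR U H W (a *: d1 + e1) (a *: d2 + e2) (a *: d3 + e3)
  = a *: BmatR U H W d1 d2 d3 + BmatR U H W e1 e2 e3.
Proof.
rewrite /BmatR !linearP /= !mulmxDl -!scalemxAl !scalerDr.
by rewrite [X in X + _ = _]addrACA [LHS]addrACA.
Qed.

Lemma BmatRE (R : comNzRingType) K (U H W : 'M[R]_K) d1 d2 d3 i j :
  BmatR U H W d1 d2 d3 i j = H i j * d1 0 j + \sum_k H i k * d2 0 k * U k j
     + \sum_k W i k * d3 0 k * H k j.
Proof.
rewrite /BmatR !mul_mx_diag !mxE; congr (_ + _ + _); apply: eq_bigr => k _; by rewrite !mxE.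
Qed.

Definition interference_aligned K (U H W : 'M[C]_K) (d1 d2 d3 : 'rV[C]_K) (lam : 'I_K -> C) :=
  forall i : 'I_K,
    (forall j : 'I_K, j != i -> Bmat U H W d1 d2 d3 i j = lam i * H i j) /\
    Bmat U H W d1 d2 d3 i i != lam i * H i i.

Lemma interference_aligned_diag K (U H W : 'M[C]_K) d1 d2 d3 (lam : 'I_K -> C) (delta : 'rV[C]_K) :
  Bmat U H W d1 d2 d3 - diag_mx (\row_i lam i) *m H = diag_mx delta -> (forall i, delta 0 i != 0) ->
  interference_aligned U H W d1 d2 d3 lam.
Proof.
move=> /matrixP eqB nz_delta i.
have Bij j : Bmat U H W d1 d2 d3 i j = lam i * H i j + delta 0 i *+ (i == j).
  by move: (eqB i j); rewrite mxE mul_diag_mx !mxE => <-; rewrite [RHS]addrC subrK.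
split=> [j /negbTE ji|]; first by rewrite Bij eq_sym ji mulr0n addr0.
by rewrite Bij eqxx mulr1n -subr_eq0 addrC addKr.
Qed.

Section EntryVariables.
Variable K : nat.
Local Notation N := (K * K + K * K + K * K)%N.

Definition varU : 'M[{mpoly C[N]}]_K :=
  \matrix_(i, j) 'X_(lshift (K * K) (lshift (K * K) (mxvec_index i j))).
Definition varH : 'M[{mpoly C[N]}]_K :=
  \matrix_(i, j) 'X_(lshift (K * K) (rshift (K * K) (mxvec_index i j))).
Definition varW : 'M[{mpoly C[N]}]_K :=
  \matrix_(i, j) 'X_(rshift (K * K + K * K) (mxvec_index i j)).

Variables U H W : 'M[C]_K.
Local Notation ev := (meval (fun k => entries U H W 0 k)).

Lemma map_ev_varU : map_mx ev varU = U.
Proof. by apply/matrixP => i j; rewrite !mxE mevalXU /entries row_mxEl row_mxEl mxvecE. Qed.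
Lemma map_ev_varH : map_mx ev varH = H.
Proof. by apply/matrixP => i j; rewrite !mxE mevalXU /entries row_mxEl row_mxEr mxvecE. Qed.
Lemma map_ev_varW : map_mx ev varW = W.
Proof. by apply/matrixP => i j; rewrite !mxE mevalXU /entries row_mxEr mxvecE. Qed.

End EntryVariables.

Section GenericLinearSystem.
Variable K : nat.
Variable L : forall {R : comNzRingType}, 'M[R]_K -> 'M[R]_K -> 'M[R]_K -> 'M[R]_K -> 'M[R]_K.
Hypothesis L_linear : forall (R : comNzRingType) (U H W : 'M[R]_K), linear (L U H W).
Hypothesis map_L : forall (R S : comNzRingType) (g : {rmorphism R -> S}) (U H W X : 'M[R]_K),
  map_mx g (L U H W X) = L (map_mx g U) (map_mx g H) (map_mx g W) (map_mx g X).
Variable T : forall R : comNzRingType, 'M[R]_K.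
Hypothesis map_T : forall (R S : comNzRingType) (g : {rmorphism R -> S}), map_mx g (T R) = T S.
Variables a b : 'I_K.

(* [Lfun] carries the linear structure that the [lin_mx] lemmas need. *)
Section Instance.
Variables (R : comNzRingType) (U H W : 'M[R]_K).
Definition Lfun := L U H W.
HB.instance Definition _ := GRing.isLinear.Build R _ _ _ Lfun (L_linear U H W).
End Instance.

Definition sysmx (R : comNzRingType) (U H W : 'M[R]_K) : 'M[R]_(K * K) := lin_mx (Lfun U H W).

Lemma mul_sysmx (R : comNzRingType) (U H W X : 'M[R]_K) :
  mxvec X *m sysmx U H W = mxvec (L U H W X).
Proof. exact: mul_vec_lin. Qed.

Lemma map_sysmx (R S : comNzRingType) (g : {rmorphism R -> S}) (U H W : 'M[R]_K) :
  map_mx g (sysmx U H W) = sysmx (map_mx g U) (map_mx g H) (map_mx g W).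
Proof. exact: map_lin_mx. Qed.

Definition cramer (R : comNzRingType) (U H W : 'M[R]_K) : R :=
  \det (sysmx U H W) * (mxvec (T R) *m \adj (sysmx U H W)) 0 (mxvec_index a b).

Lemma map_cramer (R S : comNzRingType) (g : {rmorphism R -> S}) (U H W : 'M[R]_K) :
  g (cramer U H W) = cramer (map_mx g U) (map_mx g H) (map_mx g W).
Proof.
rewrite /cramer rmorphM -det_map_mx map_sysmx; congr (_ * _).
by rewrite -map_sysmx -map_mx_adj -(map_T g) -map_mxvec -map_mxM [RHS]mxE.
Qed.

Section FieldSolution.
Variables (R : fieldType) (U H W : 'M[R]_K).

Definition solution : 'M[R]_K := vec_mx (mxvec (T R) *m invmx (sysmx U H W)).

Lemma solutionP : sysmx U H W \in unitmx -> L U H W solution = T R.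
Proof. by move=> unitN; apply: (can_inj mxvecK); rewrite -mul_sysmx vec_mxK mulmxKV. Qed.

Lemma unit_sysmx : (forall X, L U H W X = 0 -> X = 0) -> sysmx U H W \in unitmx.
Proof.
move=> kerL; rewrite unitmxE unitfE; apply/negP => /det0P[v nz_v vN0].
have : vec_mx v = 0.
  by apply: kerL; apply: (can_inj mxvecK); rewrite -mul_sysmx vec_mxK vN0 linear0.
by move/eqP; rewrite vec_mx_eq0 (negbTE nz_v).
Qed.

Lemma cramerE : sysmx U H W \in unitmx ->
  cramer U H W = \det (sysmx U H W) ^+ 2 * solution a b.
Proof.
move=> unitN; rewrite /cramer /solution -[vec_mx _ a b]mxvecE vec_mxK.
by rewrite /invmx unitN -scalemxAr [in RHS]mxE expr2 -mulrA mulVKf // -unitfE -unitmxE.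
Qed.

End FieldSolution.

Lemma solution_of_cramer (R : fieldType) (U H W : 'M[R]_K) :
  cramer U H W != 0 -> exists X, L U H W X = T R /\ X a b != 0.
Proof.
move=> nz; have unitN : sysmx U H W \in unitmx.
  by apply: contraNT nz; rewrite unitmxE unitfE negbK /cramer => /eqP->; rewrite mul0r.
exists (solution U H W); split; first exact: solutionP.
by apply: contraNneq nz; rewrite cramerE // => ->; rewrite mulr0.
Qed.

Lemma cramer_of_witness (R : fieldType) (U H W X0 : 'M[R]_K) :
  (forall c X, L U H W X = c *: T R -> X = c *: X0) -> X0 a b != 0 -> cramer U H W != 0.
Proof.
move=> solL nzX0; have unitN : sysmx U H W \in unitmx.
  by apply: unit_sysmx => X LX0; rewrite (solL 0 X) ?scale0r // LX0 scale0r.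
rewrite cramerE // mulf_neq0 //; first by rewrite expf_neq0 // -unitfE -unitmxE.
by rewrite (solL 1 (solution U H W)) ?scale1r ?solutionP.
Qed.

Theorem generic_solvability (R : fieldType) (g : {rmorphism R -> C}) (U0 H0 W0 X0 : 'M[R]_K) :
  (forall c X, L U0 H0 W0 X = c *: T R -> X = c *: X0) -> X0 a b != 0 ->
  exists P : {mpoly C[K * K + K * K + K * K]}, P != 0 /\
    forall U H W : 'M[C]_K, eval_entries P U H W != 0 -> exists X, L U H W X = T C /\ X a b != 0.
Proof.
move=> solL nzX0; exists (cramer (varU K) (varH K) (varW K)).
have evalP U H W : eval_entries (cramer (varU K) (varH K) (varW K)) U H W = cramer U H W.
  by rewrite /eval_entries map_cramer map_ev_varU map_ev_varH map_ev_varW.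
split=> [|U H W]; last by rewrite evalP; exact: solution_of_cramer.
apply: contraTneq (cramer_of_witness solL nzX0) => P0.
by rewrite -(fmorph_eq0 g) map_cramer negbK -evalP P0 /eval_entries meval0.
Qed.

End GenericLinearSystem.

Definition mx_of_seqs {R : nzRingType} {n : nat} (t : seq (seq R)) : 'M[R]_n :=
  \matrix_(i, j) nth 0 (nth [::] t i) j.

Section ThreeUsers.
Local Notation i0 := (@Ordinal 3 0 isT).
Local Notation i1 := (@Ordinal 3 1 isT).
Local Notation i2 := (@Ordinal 3 2 isT).

Lemma ord3P (i : 'I_3) : [\/ i = i0, i = i1 | i = i2].
Proof.
by case: i => -[|[|[|[]]]] // ?; [constructor 1 | constructor 2 | constructor 3]; apply: val_inj.
Qed.

Lemma sum3 (V : nmodType) (F : 'I_3 -> V) : \sum_(k < 3) F k = F i0 + F i1 + F i2.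
Proof. by rewrite !big_ord_recl big_ord0 addr0 !addrA; congr (F _ + F _ + F _); apply: val_inj. Qed.

Definition L3 (R : comNzRingType) (U H W X : 'M[R]_3) : 'M[R]_3 :=
  BmatR U H W (row i0 X) (row i1 X) (row i2 X).

Lemma L3_linear (R : comNzRingType) (U H W : 'M[R]_3) : linear (L3 U H W).
Proof. by move=> a X Y; rewrite /L3 !linearP BmatR_linearP. Qed.

Lemma map_L3 (R S : comNzRingType) (g : {rmorphism R -> S}) (U H W X : 'M[R]_3) :
  map_mx g (L3 U H W X) = L3 (map_mx g U) (map_mx g H) (map_mx g W) (map_mx g X).
Proof. by rewrite /L3 map_BmatR !map_row. Qed.

(* With H = I and U, W the two cyclic shifts, the three terms of B have disjoint supports. *)
Definition U3 : 'M[rat]_3 := mx_of_seqs [:: [:: 0; 1; 0]; [:: 0; 0; 1]; [:: 1; 0; 0]].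
Definition W3 : 'M[rat]_3 := mx_of_seqs [:: [:: 0; 0; 1]; [:: 1; 0; 0]; [:: 0; 1; 0]].
Definition X3 : 'M[rat]_3 := mx_of_seqs [:: [:: 1; 1; 1]; [:: 0; 0; 0]; [:: 0; 0; 0]].

Lemma L3_witness (c : rat) (X : 'M[rat]_3) : L3 U3 1%:M W3 X = c *: 1%:M -> X = c *: X3.
Proof.
move=> /matrixP e.
move: (e i0 i0) (e i0 i1) (e i0 i2) (e i1 i0) (e i1 i1) (e i1 i2) (e i2 i0) (e i2 i1) (e i2 i2).
rewrite /L3 !BmatRE !sum3 !mxE /= => *.
by apply/matrixP => i j; rewrite !mxE; case: (ord3P i) => ->; case: (ord3P j) => ->; rewrite /=; lra.
Qed.

Lemma three_users_generic : exists P : {mpoly C[3 * 3 + 3 * 3 + 3 * 3]},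
  P != 0 /\ forall U H W : 'M[C]_3, eval_entries P U H W != 0 ->
    exists d1 d2 d3 lam, interference_aligned U H W d1 d2 d3 lam.
Proof.
have nzX3 : X3 i0 i0 != 0 by rewrite mxE oner_eq0.
have [P [nzP solP]] := generic_solvability L3_linear map_L3 (T := fun R => 1%:M)
  (fun _ _ g => map_mx1 g _) ratr L3_witness nzX3.
exists P; split=> // U H W /solP[X [LX _]].
exists (row i0 X), (row i1 X), (row i2 X), (fun=> 0).
apply: (interference_aligned_diag (delta := const_mx 1)) => [|i]; last by rewrite mxE oner_eq0.
have -> : \row_(i < 3) (0 : C) = 0 by apply/rowP => i; rewrite !mxE.
by rewrite linear0 mul0mx subr0 diag_const_mx; exact: LX.
Qed.

End ThreeUsers.

Section FourUsers.
Local Notation i0 := (@Ordinal 4 0 isT).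
Local Notation i1 := (@Ordinal 4 1 isT).
Local Notation i2 := (@Ordinal 4 2 isT).
Local Notation i3 := (@Ordinal 4 3 isT).

Lemma ord4P (i : 'I_4) : [\/ i = i0, i = i1, i = i2 | i = i3].
Proof.
by case: i => -[|[|[|[|[]]]]] // ?;
  [constructor 1 | constructor 2 | constructor 3 | constructor 4]; apply: val_inj.
Qed.

Lemma sum4 (V : nmodType) (F : 'I_4 -> V) : \sum_(k < 4) F k = F i0 + F i1 + F i2 + F i3.
Proof.
by rewrite !big_ord_recl big_ord0 addr0 !addrA; congr (F _ + F _ + F _ + F _); apply: val_inj.
Qed.

(* The rows of X are d1 (whose first entry is the slack eps instead), d2, d3 and lambda. *)
Definition L4 (R : comNzRingType) (U H W X : 'M[R]_4) : 'M[R]_4 :=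
  BmatR U H W (row i0 X - X i0 i0 *: delta_mx 0 i0) (row i1 X) (row i2 X)
  - diag_mx (row i3 X) *m H - X i0 i0 *: delta_mx i3 i3.

Lemma L4_linear (R : comNzRingType) (U H W : 'M[R]_4) : linear (L4 U H W).
Proof.
move=> a X Y; have entry : (a *: X + Y) i0 i0 = a * X i0 i0 + Y i0 i0 by rewrite !mxE.
have d1P : row i0 (a *: X + Y) - (a *: X + Y) i0 i0 *: delta_mx 0 i0
    = a *: (row i0 X - X i0 i0 *: delta_mx 0 i0) + (row i0 Y - Y i0 i0 *: delta_mx 0 i0).
  by rewrite entry linearP scalerDl -scalerA scalerBr opprD addrACA.
rewrite /L4 d1P !linearP BmatR_linearP entry scalerDl -scalerA /= mulmxDl -scalemxAl.
by rewrite !scalerBr !opprD [X in X + _ = _]addrACA [LHS]addrACA.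
Qed.

Lemma map_L4 (R S : comNzRingType) (g : {rmorphism R -> S}) (U H W X : 'M[R]_4) :
  map_mx g (L4 U H W X) = L4 (map_mx g U) (map_mx g H) (map_mx g W) (map_mx g X).
Proof.
rewrite /L4 !map_mxB map_BmatR map_mxB !map_mxZ map_mxM map_diag_mx !map_row.
by rewrite !map_delta_mx mxE.
Qed.

Lemma L4E (R : comNzRingType) (U H W X : 'M[R]_4) i j :
  L4 U H W X i j = H i j * (X i0 j - X i0 i0 * (j == i0)%:R)
    + \sum_k H i k * X i1 k * U k j + \sum_k W i k * X i2 k * H k j
    - X i3 i * H i j - X i0 i0 * ((i == i3) && (j == i3))%:R.
Proof.
rewrite /L4 mxE [X in X + _]mxE BmatRE mul_diag_mx !mxE /=.
by congr (_ + _ + _ - _ - _); apply: eq_bigr => k _; rewrite mxE.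
Qed.

Definition T4 (R : comNzRingType) : 'M[R]_4 := 1%:M - delta_mx i3 i3.

Lemma map_T4 (R S : comNzRingType) (g : {rmorphism R -> S}) : map_mx g (T4 R) = T4 S.
Proof. by rewrite map_mxB map_mx1 map_delta_mx. Qed.

(* A 0/1 witness found by search; [X4] is the solution of its system. *)
Definition U4 : 'M[rat]_4 :=
  mx_of_seqs [:: [:: 0; 0; 0; 1]; [:: 0; 0; 1; 0]; [:: 1; 0; 0; 0]; [:: 0; 0; 1; 0]].
Definition H4 : 'M[rat]_4 :=
  mx_of_seqs [:: [:: 0; 1; 1; 0]; [:: 1; 1; 0; 1]; [:: 0; 1; 0; 1]; [:: 1; 0; 1; 0]].
Definition W4 : 'M[rat]_4 :=
  mx_of_seqs [:: [:: 0; 0; 1; 0]; [:: 0; 0; 0; 0]; [:: 0; 1; 1; 1]; [:: 1; 0; 1; 0]].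
Definition X4 : 'M[rat]_4 :=
  mx_of_seqs [:: [:: -1; 1; 1; 1]; [:: -1; 0; 1; 0]; [:: 0; -1; 0; 1]; [:: 1; 0; 0; 1]].

Lemma L4_witness (c : rat) (X : 'M[rat]_4) : L4 U4 H4 W4 X = c *: T4 _ -> X = c *: X4.
Proof.
move=> /matrixP e.
move: (e i0 i0) (e i0 i1) (e i0 i2) (e i0 i3) (e i1 i0) (e i1 i1) (e i1 i2) (e i1 i3)
  (e i2 i0) (e i2 i1) (e i2 i2) (e i2 i3) (e i3 i0) (e i3 i1) (e i3 i2) (e i3 i3).
rewrite !L4E !sum4 !mxE /= ?(mul0r, mulr0, mul1r, mulr1, addr0, add0r, subr0, sub0r) => *.
by apply/matrixP => i j; rewrite !mxE; case: (ord4P i) => ->; case: (ord4P j) => ->; rewrite /=; lra.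
Qed.

Lemma four_users_generic : exists P : {mpoly C[4 * 4 + 4 * 4 + 4 * 4]},
  P != 0 /\ forall U H W : 'M[C]_4, eval_entries P U H W != 0 ->
    exists d1 d2 d3 lam, interference_aligned U H W d1 d2 d3 lam.
Proof.
have nzX4 : X4 i0 i0 != 0 by rewrite mxE.
have [P [nzP solP]] := generic_solvability L4_linear map_L4 map_T4 ratr L4_witness nzX4.
exists P; split=> // U H W /solP[X [LX nzX]].
exists (row i0 X - X i0 i0 *: delta_mx 0 i0), (row i1 X), (row i2 X), (fun i => X i3 i).
pose delta : 'rV[C]_4 := \row_j (if j == i3 then X i0 i0 else 1).
apply: (interference_aligned_diag (delta := delta)) => [|i]; last first.
  by rewrite mxE; case: ifP; rewrite ?oner_eq0.
have -> : Bmat U H W (row i0 X - X i0 i0 *: delta_mx 0 i0) (row i1 X) (row i2 X)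
    - diag_mx (row i3 X) *m H = T4 C + X i0 i0 *: delta_mx i3 i3 by rewrite -LX subrK.
apply/matrixP => i j; rewrite !mxE.
by case: (ord4P i) => ->; case: (ord4P j) => ->; rewrite /=; ring.
Qed.

End FourUsers.

Theorem theorem5 (K : nat) (hK : K = 3%N \/ K = 4%N) :
  exists P : {mpoly C[K * K + K * K + K * K]},
    P != 0 /\
    forall U H W : 'M[C]_K,
      eval_entries P U H W != 0 ->
      exists (d1 d2 d3 : 'rV[C]_K) (lam : 'I_K -> C),
        forall i : 'I_K,
          (forall j : 'I_K, j != i -> Bmat U H W d1 d2 d3 i j = lam i * H i j) /\
          Bmat U H W d1 d2 d3 i i != lam i * H i i.
Proof. by case: hK => ->; [exact: three_users_generic | exact: four_users_generic]. Qed.
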